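(* Let $K$ be a skew field, let $V$ be a left (topological) vector space over $K$ with basis $v^0,v^1,\ldots$, and let $V'$ be the dual right (topological) vector space with basis $p_0,p_1,\ldots$, with pairing $(\cdot,\cdot):V\times V'\to K$. Put $y_i^k=(v^k,p_i)$ and let $D$ be the infinite matrix whose entry in row $k$ and column $i$ is $y_i^k$ ($i,k\ge 0$). For a generic matrix $D$ there exist a unique infinite upper triangular matrix $A=(a_m^i)_{i,m\ge0}$ (i.e. $a_m^i=0$ for $i>m$) and a unique infinite lower triangular matrix $C=(c_k^m)_{m,k\ge0}$ (i.e. $c_k^m=0$ for $k>m$) such that the vectors $$w^m=\sum_{k=0}^m c_k^m v^k\in V,\qquad q_m=\sum_{i=0}^m p_i a_m^i\in V'$$ form biorthogonal bases of $V$ and $V'$, i.e. satisfy $(w^m,q_{m'})=0$ for $m\ne m'$ and $(w^m,p_m)=(v^m,q_m)=1$ for all $m\ge0$.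
   Context: The pairing satisfies $(\lambda v,p\mu)=\lambda(v,p)\mu$ for $\lambda,\mu\in K$, and is additive in each argument. ''Generic'' means that $D$ avoids the degenerate cases in which the relevant finite square submatrices of $D$ (here the leading principal submatrices $(y_i^k)_{0\le i,k\le m}$, $m\ge0$) fail to be invertible. *)

From HB Require Import structures.
From mathcomp Require Import all_boot all_order all_algebra.
Set Implicit Arguments. Unset Strict Implicit. Unset Printing Implicit Defensive.
Import Order.TTheory GRing.Theory.
Local Open Scope ring_scope.

Definition skew_field (K : unitRingType) : Prop :=
  forall x : K, x != 0 -> x \is a GRing.unit.

(* A pairing between a left K-vector space V and a right K-vector space V'
   (a right K-space is a left module over the converse ring K^c, with
   p * mu written (mu : K^c) *: p). *)
Definition is_pairing (K : unitRingType) (V : lmodType K) (V' : lmodType K^c)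
  (pair : V -> V' -> K) : Prop :=
  [/\ forall v1 v2 p, pair (v1 + v2) p = pair v1 p + pair v2 p,
      forall v p1 p2, pair v (p1 + p2) = pair v p1 + pair v p2,
      forall (l : K) v p, pair (l *: v) p = l * pair v p
    & forall v (m : K) p, pair v ((m : K^c) *: p) = pair v p * m].

Definition Dmat (K : unitRingType) (V : lmodType K) (V' : lmodType K^c)
  (pair : V -> V' -> K) (v : nat -> V) (p : nat -> V') : nat -> nat -> K :=
  fun k i => pair (v k) (p i).

Definition lead_submx (K : unitRingType) (D : nat -> nat -> K) (m : nat)
  : 'M[K]_(m.+1) := \matrix_(k < m.+1, i < m.+1) D k i.

(* Invertibility of a square matrix over a (possibly noncommutative) ring:
   existence of a two-sided inverse. *)
Definition invertible_mx (K : unitRingType) (n : nat) (M : 'M[K]_n) : Prop :=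
  exists N : 'M[K]_n, M *m N = 1%:M /\ N *m M = 1%:M.

Definition generic_mx (K : unitRingType) (D : nat -> nat -> K) : Prop :=
  forall m : nat, invertible_mx (lead_submx D m).

(* A : nat -> nat -> K with A i m = a_m^i (upper triangular: a_m^i = 0 for i > m);
   C : nat -> nat -> K with C m k = c_k^m (lower triangular: c_k^m = 0 for k > m). *)
Definition upper_tri (K : unitRingType) (A : nat -> nat -> K) : Prop :=
  forall i m : nat, (m < i)%N -> A i m = 0.
Definition lower_tri (K : unitRingType) (C : nat -> nat -> K) : Prop :=
  forall m k : nat, (m < k)%N -> C m k = 0.

Definition wvec (K : unitRingType) (V : lmodType K) (v : nat -> V)
  (C : nat -> nat -> K) (m : nat) : V :=
  \sum_(k < m.+1) C m k *: v k.

Definition qvec (K : unitRingType) (V' : lmodType K^c) (p : nat -> V')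
  (A : nat -> nat -> K) (m : nat) : V' :=
  \sum_(i < m.+1) (A i m : K^c) *: p i.

Definition biorthogonal (K : unitRingType) (V : lmodType K) (V' : lmodType K^c)
  (pair : V -> V' -> K) (v : nat -> V) (p : nat -> V')
  (A C : nat -> nat -> K) : Prop :=
  [/\ forall m m' : nat, m <> m' -> pair (wvec v C m) (qvec p A m') = 0,
      forall m : nat, pair (wvec v C m) (p m) = 1
    & forall m : nat, pair (v m) (qvec p A m) = 1].

(* The inverse of the leading block D_m = (y_i^k)_{k,i<=m} supplies everything: its last
   column is (a_m^i)_i and its last row is (c_k^m)_k, so that (v^k, q_m) = [k = m] and
   (w^m, p_i) = [i = m] for k, i <= m, which by triangularity gives biorthogonality.
   Conversely, for any triangular biorthogonal pair, the diagonal entries a_n^n and c_n^n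
   are nonzero (by a joint induction on n, using the invertibility of D_(n-1)); solving the
   triangular systems (w^m, q_n) = 0 (m < n) then gives (v^k, q_n) = 0 for k < n, so the
   columns of A satisfy the same invertible linear systems, and dually for C. *)
From HB Require Import structures.
From mathcomp Require Import all_boot all_order all_algebra.
Set Implicit Arguments. Unset Strict Implicit. Unset Printing Implicit Defensive.
Import GRing.Theory.
Local Open Scope ring_scope.

Section TriangularSystems.
Variable K : pzRingType.

Lemma lower_tri_solve0 (C : nat -> nat -> K) (f : nat -> K) n :
  (forall m, (m < n)%N -> GRing.lreg (C m m)) ->
  (forall m, (m < n)%N -> \sum_(k < m.+1) C m k * f k = 0) ->
  forall k, (k < n)%N -> f k = 0.
Proof.
move=> regC Cf0; elim/ltn_ind=> k IHk ltkn.
apply: (regC k ltkn); rewrite mulr0 -[RHS](Cf0 k ltkn) big_ord_recr /=.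
rewrite big1 ?add0r // => j _.
by rewrite IHk ?mulr0 // (ltn_trans (ltn_ord j)).
Qed.

Lemma upper_tri_solve0 (A : nat -> nat -> K) (f : nat -> K) n :
  (forall m, (m < n)%N -> GRing.rreg (A m m)) ->
  (forall m, (m < n)%N -> \sum_(i < m.+1) f i * A i m = 0) ->
  forall i, (i < n)%N -> f i = 0.
Proof.
move=> regA fA0; elim/ltn_ind=> i IHi ltin.
apply: (regA i ltin); rewrite mul0r -[RHS](fA0 i ltin) big_ord_recr /=.
rewrite big1 ?add0r // => j _.
by rewrite IHi ?mul0r // (ltn_trans (ltn_ord j)).
Qed.

Definition lead_col_inverse (D A : nat -> nat -> K) : Prop :=
  forall m k, (k <= m)%N -> \sum_(i < m.+1) D k i * A i m = (k == m)%:R.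

Definition lead_row_inverse (D C : nat -> nat -> K) : Prop :=
  forall m i, (i <= m)%N -> \sum_(k < m.+1) C m k * D k i = (i == m)%:R.

End TriangularSystems.

Section GenericMatrix.
Variables (K : unitRingType) (D : nat -> nat -> K).
Hypothesis genD : generic_mx D.

Lemma generic_col_eq0 j (a : nat -> K) :
  (forall k, (k < j)%N -> \sum_(i < j) D k i * a i = 0) ->
  forall i, (i < j)%N -> a i = 0.
Proof.
case: j => [//|j] Da0 i ltij.
have [N [_ NM]] := genD j.
set c := \col_(i < j.+1) a i.
have Mc0 : lead_submx D j *m c = 0.
  apply/matrixP=> k z; rewrite !mxE -[RHS](Da0 k (ltn_ord k)).
  by apply: eq_bigr => l _; rewrite !mxE.
have : c = 0 by rewrite -[c]mul1mx -NM -mulmxA Mc0 mulmx0.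
by move/matrixP/(_ (Ordinal ltij) 0); rewrite !mxE.
Qed.

Lemma generic_row_eq0 j (c : nat -> K) :
  (forall i, (i < j)%N -> \sum_(k < j) c k * D k i = 0) ->
  forall k, (k < j)%N -> c k = 0.
Proof.
case: j => [//|j] cD0 k ltkj.
have [N [MN _]] := genD j.
set r := \row_(k < j.+1) c k.
have rM0 : r *m lead_submx D j = 0.
  apply/matrixP=> z i; rewrite !mxE -[RHS](cD0 i (ltn_ord i)).
  by apply: eq_bigr => l _; rewrite !mxE.
have : r = 0 by rewrite -[r]mulmx1 -MN mulmxA rM0 mul0mx.
by move/matrixP/(_ 0 (Ordinal ltkj)); rewrite !mxE.
Qed.

Lemma lead_inverse_exists : exists A C : nat -> nat -> K,
  [/\ upper_tri A, lower_tri C, lead_col_inverse D A & lead_row_inverse D C].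
Proof.
have invD m : exists N : 'M[K]_m.+1,
    (lead_submx D m *m N == 1%:M) && (N *m lead_submx D m == 1%:M).
  by have [N [MN NM]] := genD m; exists N; rewrite MN NM !eqxx.
pose N m := xchoose (invD m).
have [MN NM] : (forall m, lead_submx D m *m N m = 1%:M)
             /\ (forall m, N m *m lead_submx D m = 1%:M).
  by split=> m; have /andP[/eqP MN /eqP NM] := xchooseP (invD m).
pose A i m := if (i <= m)%N then N m (inord i) (inord m) else 0.
pose C m k := if (k <= m)%N then N m (inord m) (inord k) else 0.
exists A, C; split.
- by move=> i m ltmi; rewrite /A leqNgt ltmi.
- by move=> m k ltmk; rewrite /C leqNgt ltmk.
- move=> m k lekm.
  transitivity ((lead_submx D m *m N m) (inord k) (inord m)); last first.
    by rewrite MN mxE -val_eqE /= !inordK.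
  rewrite mxE; apply: eq_bigr => i _.
  by rewrite /A -ltnS ltn_ord mxE inordK // inord_val.
- move=> m i leim.
  transitivity ((N m *m lead_submx D m) (inord m) (inord i)); last first.
    by rewrite NM mxE eq_sym -val_eqE /= !inordK.
  rewrite mxE; apply: eq_bigr => k _.
  by rewrite /C -ltnS ltn_ord mxE inordK // inord_val.
Qed.

Lemma lead_col_inverse_unique (A A' : nat -> nat -> K) :
  upper_tri A -> upper_tri A' -> lead_col_inverse D A -> lead_col_inverse D A' ->
  forall i m, A' i m = A i m.
Proof.
move=> uA uA' DA DA' i m; case: (leqP i m) => [leim|ltmi]; last by rewrite uA ?uA'.
apply/eqP; rewrite -subr_eq0 -ltnS in leim *; apply/eqP; move: i leim.
apply: (generic_col_eq0 (a := fun i => A' i m - A i m)) => k ltkm.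
by under eq_bigr do rewrite mulrBr; rewrite sumrB DA' ?DA ?subrr.
Qed.

Lemma lead_row_inverse_unique (C C' : nat -> nat -> K) :
  lower_tri C -> lower_tri C' -> lead_row_inverse D C -> lead_row_inverse D C' ->
  forall m k, C' m k = C m k.
Proof.
move=> lC lC' CD C'D m k; case: (leqP k m) => [lekm|ltmk]; last by rewrite lC ?lC'.
apply/eqP; rewrite -subr_eq0 -ltnS in lekm *; apply/eqP; move: k lekm.
apply: (generic_row_eq0 (c := fun k => C' m k - C m k)) => i ltim.
by under eq_bigr do rewrite mulrBl; rewrite sumrB C'D ?CD ?subrr.
Qed.

End GenericMatrix.

Section Pairing.
Variables (K : unitRingType) (V : lmodType K) (V' : lmodType K^c).
Variables (pair : V -> V' -> K) (v : nat -> V) (p : nat -> V').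
Hypothesis pairP : is_pairing pair.

Local Notation D := (Dmat pair v p).

Lemma pair_wvec (C : nat -> nat -> K) m q :
  pair (wvec v C m) q = \sum_(k < m.+1) C m k * pair (v k) q.
Proof.
case: pairP => pairDl _ pairZl _.
have pair0l : pair 0 q = 0.
  by apply: (addrI (pair 0 q)); rewrite -pairDl !addr0.
rewrite /wvec (big_morph (pair^~ q) (fun x y => pairDl x y q) pair0l).
by apply: eq_bigr => k _; rewrite pairZl.
Qed.

Lemma pair_qvec (A : nat -> nat -> K) m u :
  pair u (qvec p A m) = \sum_(i < m.+1) pair u (p i) * A i m.
Proof.
case: pairP => _ pairDr _ pairZr.
have pair0r : pair u 0 = 0.
  by apply: (addrI (pair u 0)); rewrite -pairDr !addr0.
rewrite /qvec (big_morph (pair u) (pairDr u) pair0r).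
by apply: eq_bigr => i _; rewrite pairZr.
Qed.

Lemma lead_inverse_biorthogonal (A C : nat -> nat -> K) :
  lead_col_inverse D A -> lead_row_inverse D C -> biorthogonal pair v p A C.
Proof.
move=> DA CD; split=> [m m' neq_mm' | m | m]; last 2 first.
- by rewrite pair_wvec CD ?eqxx.
- by rewrite pair_qvec DA ?eqxx.
case: (ltngtP m m') neq_mm' => [ltmm' | ltm'm | ->] // _.
- rewrite pair_wvec big1 // => k _.
  have ltkm' : (k < m')%N := leq_trans (ltn_ord k) ltmm'.
  by rewrite pair_qvec DA ?(ltnW ltkm') // ltn_eqF // mulr0.
- rewrite pair_qvec big1 // => i _.
  have ltim : (i < m)%N := leq_trans (ltn_ord i) ltm'm.
  by rewrite pair_wvec CD ?(ltnW ltim) // ltn_eqF // mul0r.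
Qed.

Hypotheses (skK : skew_field K) (genD : generic_mx D).
Variables A C : nat -> nat -> K.
Hypothesis bo : biorthogonal pair v p A C.

Lemma biorthogonal_v_qvec0 n : (forall m, (m < n)%N -> C m m != 0) ->
  forall k, (k < n)%N -> pair (v k) (qvec p A n) = 0.
Proof.
move=> nzC; apply: (lower_tri_solve0 (C := C)) => m ltmn.
  exact/mulrI/skK/nzC.
case: bo => bo0 _ _; rewrite -pair_wvec bo0 //.
by apply/eqP; rewrite ltn_eqF.
Qed.

Lemma biorthogonal_wvec_p0 n : (forall m, (m < n)%N -> A m m != 0) ->
  forall i, (i < n)%N -> pair (wvec v C n) (p i) = 0.
Proof.
move=> nzA; apply: (upper_tri_solve0 (A := A)) => m ltmn.
  exact/mulIr/skK/nzA.
case: bo => bo0 _ _; rewrite -pair_qvec bo0 //.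
by apply/eqP; rewrite gtn_eqF.
Qed.

Lemma biorthogonal_diag_neq0 n : A n n != 0 /\ C n n != 0.
Proof.
elim/ltn_ind: n => n IH.
have [nzA nzC] : (forall m, (m < n)%N -> A m m != 0)
              /\ (forall m, (m < n)%N -> C m m != 0).
  by split=> m /IH[].
case: bo => _ bo_wp bo_vq; split; apply/eqP => diag0.
- have colA0 : forall i, (i < n)%N -> A i n = 0.
    apply: (generic_col_eq0 genD) => k ltkn.
    rewrite -[RHS](biorthogonal_v_qvec0 nzC ltkn) pair_qvec big_ord_recr /=.
    by rewrite diag0 mulr0 addr0.
  have := bo_vq n; rewrite pair_qvec big_ord_recr /= diag0 mulr0 addr0.
  rewrite big1 => [/eqP|i _]; first by rewrite eq_sym oner_eq0.
  by rewrite colA0 ?mulr0.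
- have rowC0 : forall k, (k < n)%N -> C n k = 0.
    apply: (generic_row_eq0 genD) => i ltin.
    rewrite -[RHS](biorthogonal_wvec_p0 nzA ltin) pair_wvec big_ord_recr /=.
    by rewrite diag0 mul0r addr0.
  have := bo_wp n; rewrite pair_wvec big_ord_recr /= diag0 mul0r addr0.
  rewrite big1 => [/eqP|k _]; first by rewrite eq_sym oner_eq0.
  by rewrite rowC0 ?mul0r.
Qed.

Lemma biorthogonal_lead_col_inverse : lead_col_inverse D A.
Proof.
move=> m k; rewrite leq_eqVlt => /predU1P[-> | ltkm].
  by rewrite eqxx -pair_qvec; case: bo.
rewrite ltn_eqF // -pair_qvec; apply: biorthogonal_v_qvec0 ltkm => j _.
exact: (biorthogonal_diag_neq0 j).2.
Qed.

Lemma biorthogonal_lead_row_inverse : lead_row_inverse D C.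
Proof.
move=> m i; rewrite leq_eqVlt => /predU1P[-> | ltim].
  by rewrite eqxx -pair_wvec; case: bo.
rewrite ltn_eqF // -pair_wvec; apply: biorthogonal_wvec_p0 ltim => j _.
exact: (biorthogonal_diag_neq0 j).1.
Qed.

End Pairing.

Theorem theorem1 (K : unitRingType) (V : lmodType K) (V' : lmodType K^c)
  (pair : V -> V' -> K) (v : nat -> V) (p : nat -> V') :
  skew_field K ->
  is_pairing pair ->
  generic_mx (Dmat pair v p) ->
  exists A C : nat -> nat -> K,
    [/\ upper_tri A, lower_tri C, biorthogonal pair v p A C
      & forall A' C' : nat -> nat -> K,
          upper_tri A' -> lower_tri C' -> biorthogonal pair v p A' C' ->
          (forall i m, A' i m = A i m) /\ (forall m k, C' m k = C m k)].
Proof.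
move=> skK pairP genD.
have [A [C [uA lC DA CD]]] := lead_inverse_exists genD.
exists A, C; split=> // [|A' C' uA' lC' bo'].
  exact: lead_inverse_biorthogonal.
split.
- apply: (lead_col_inverse_unique genD uA uA' DA).
  exact: (biorthogonal_lead_col_inverse pairP skK genD bo').
- apply: (lead_row_inverse_unique genD lC lC' CD).
  exact: (biorthogonal_lead_row_inverse pairP skK genD bo').
Qed.
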